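(* Let $t>0$ be an integer. There is a constant $C_t$ such that the following holds. Let $G=(V,E,<)$ be an ordered graph with $|V|\ge 2$ that does not contain two $t$-element vertex subsets $S,T$ such that every $s\in S$ and $w\in T$ form a double cherry. Then $|E|\le C_t|V|\log|V|$.
   Context: An ordered graph is a graph with a linear order on its vertices. Two distinct vertices of an ordered graph form a double cherry if either they are adjacent, or they can be named $u,v$ so that there are vertices $u_1,u_2,v_1,v_2$ with $u_1<u<u_2<v_1<v<v_2$ and edges $(u,v_1),(u,v_2),(v,u_1),(v,u_2)$ in the graph. *)

From mathcomp Require Import all_boot all_order.
From Stdlib Require Import Reals.
Set Implicit Arguments. Unset Strict Implicit. Unset Printing Implicit Defensive.

(* An ordered graph on n vertices: vertex set 'I_n with its natural order,
   edges given by a symmetric irreflexive relation. *)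
Definition simple_graph (n : nat) (e : rel 'I_n) : Prop :=
  symmetric e /\ irreflexive e.

Definition num_edges (n : nat) (e : rel 'I_n) : nat :=
  #|[set p : 'I_n * 'I_n | (p.1 < p.2) && e p.1 p.2]|.

Definition dcherry_uv (n : nat) (e : rel 'I_n) (u v : 'I_n) : Prop :=
  exists u1 u2 v1 v2 : 'I_n,
    [/\ (u1 < u)%N, (u < u2)%N, (u2 < v1)%N, (v1 < v)%N & (v < v2)%N] /\
    [/\ e u v1, e u v2, e v u1 & e v u2].

Definition double_cherry (n : nat) (e : rel 'I_n) (x y : 'I_n) : Prop :=
  x != y /\ (e x y \/ dcherry_uv e x y \/ dcherry_uv e y x).

From mathcomp Require Import all_boot all_order zify.
From Stdlib Require Import Reals Lra.
(* Reals rebinds [^] on [nat] to [Nat.pow]; restore [expn]. *)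
Import ssrnat.

Set Implicit Arguments. Unset Strict Implicit. Unset Printing Implicit Defensive.

(** Split the pairs [x < y] by the dyadic level [k] at which they separate:
  [x] lies in the left and [y] in the right half of one dyadic block of length
  [2 ^ k.+1]; there are at most [log2 n + 1] levels.  Fix a level, and let
  [(a x, b x)] span the level-[k] right neighbours of [x] and [(p y, q y)] the
  level-[k] left neighbours of [y].  Apart from at most [4 n] extreme edges,
  every edge [xy] has [a x < y < b x] and [p y < x < q y], and then [x], [y]
  form a double cherry.  So it suffices to bound by [O(t^2 n)] the number of
  pairs of this interval-containment relation when it has no [K_{t,t}].
  In row [x], all entries [c] but the last [t - 1] are followed by [t] more;
  for such [c], the first [t] elements [>= c] of the set of [y] with
  [p y < x < q y] are entries of row [x], and [t] rows sharing this window
  would form a [K_{t,t}].  So column [c] has at most [t - 1] entries per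
  distinct window.  As [x] runs through [(p c, q c)], the window only changes
  when [x] crosses an endpoint of some [(p z, q z)] with [z] among the first
  [t] elements from [c]; summed over all [c] this happens at most [2 t n]
  times. *)

Lemma card_le_strict_antitone n (B : {set 'I_n}) (g : 'I_n -> nat) k :
  {in B &, forall x y : 'I_n, x < y -> g y < g x} -> {in B, forall x, g x < k} ->
  #|B| <= k.
Proof.
move=> anti gk.
have g_inj : {in B &, injective g}.
  move=> x y xB yB gxy; apply: val_inj.
  case: (ltngtP x y) => // lt; [move: (anti _ _ xB yB lt) | move: (anti _ _ yB xB lt)];
    by rewrite gxy ltnn.
rewrite cardE -(size_map g) -[k](size_iota 0).
apply: uniq_leq_size.
  by rewrite map_inj_in_uniq ?enum_uniq // => x y; rewrite !mem_enum; exact: g_inj.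
by move=> y /mapP [x]; rewrite mem_enum mem_iota => /gk gxk ->.
Qed.

Lemma exists_subset_card (T : finType) (A : {set T}) k :
  k <= #|A| -> exists2 B : {set T}, B \subset A & #|B| = k.
Proof.
case/card_geqP => s [s_uniq s_size sA]; exists [set x in s].
  by apply/subsetP => x; rewrite inE => /sA.
by rewrite cardsE (card_uniqP s_uniq).
Qed.

Lemma card_set_sumb (T : finType) (P : pred T) : #|[set x | P x]| = \sum_x P x.
Proof.
by rewrite -sum1_card big_mkcond; apply: eq_bigr => x _; rewrite inE; case: (P x).
Qed.

Lemma card_val_fiber_le1 n m : #|[set x : 'I_n | val x == m]| <= 1.
Proof.
by apply/card_le1_eqP => x y; rewrite !inE => /eqP xm /eqP ym; apply: val_inj; rewrite xm ym.
Qed.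

Lemma leq_card_bigcup (I T : finType) (P : pred I) (F : I -> {set T}) :
  #|\bigcup_(i | P i) F i| <= \sum_(i | P i) #|F i|.
Proof.
elim/big_ind2: _ => // [|m A r B Am Br]; first by rewrite cards0.
exact: leq_trans (leq_card_setU A B).1 (leq_add Am Br).
Qed.

Lemma card_imset_interval (T : finType) n (f : nat -> T) lo hi :
  #|[set f (val x) | x in [set x : 'I_n | lo < x < hi]]| <=
  #|[set x : 'I_n | [&& lo < x.-1, x < hi & f x != f x.-1]]|.+1.
Proof.
set C := [set x : 'I_n | [&& lo < x.-1, x < hi & f x != f x.-1]].
suff sub : [set f (val x) | x in [set x : 'I_n | lo < x < hi]] \subset
           f lo.+1 |: [set f (val x) | x in C].
  apply: leq_trans (subset_leq_card sub) _.
  by rewrite cardsU1 -(add1n #|C|) leq_add ?leq_b1 ?leq_imset_card.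
apply/subsetP => y /imsetP [[m mn]]; rewrite inE /= => /andP [lm mh] ->.
elim: m mn lm mh => [//|m IH] mn lm mh.
case: (ltngtP lo m) => [lo_m | | <-]; [ | lia | by rewrite setU11].
case: (eqVneq (f m.+1) (f m)) => [-> | ne]; first exact: IH (ltnW mn) lo_m (ltnW mh).
by rewrite setU1r //; apply/imsetP; exists (Ordinal mn); rewrite // inE /= lo_m mh ne.
Qed.

Section FirstElements.
Variable n : nat.
Implicit Types A U : {set 'I_n}.

Definition card_seg A (c d : nat) : nat := #|[set y in A | c <= y < d]|.

Definition first_elems A (c k : nat) : {set 'I_n} :=
  [set y in A | (c <= y) && (card_seg A c y < k)].

Lemma card_seg_subset A U c d : A \subset U -> card_seg A c d <= card_seg U c d.
Proof.
move=> AU; apply: subset_leq_card; apply/subsetP => y; rewrite !inE.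
by case/andP => /(subsetP AU) ->.
Qed.

Lemma card_first_seg A c d k : k <= card_seg A c d ->
  k <= #|[set y in A | (c <= y < d) && (card_seg A c y < k)]|.
Proof.
set B := [set y in A | c <= y < d]; set W := [set y in A | _ && _] => kB.
rewrite leqNgt; apply/negP => Wk.
have /set0Pn [y0 y0BW] : B :\: W != set0.
  rewrite setD_eq0; apply/negP => /subset_leq_card; rewrite /card_seg -/B in kB; lia.
case: (arg_minnP val y0BW) => y /setDP [yB yW] y_min.
case/negP: yW; move: yB; rewrite !inE => /andP [-> /andP [cy yd]]; rewrite cy yd /=.
apply: leq_ltn_trans Wk; apply: subset_leq_card; apply/subsetP => z.
rewrite inE => /andP [zA /andP [cz zy]].
have zB : z \in B by rewrite inE zA cz (ltn_trans zy yd).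
by apply: contraLR zy => zW; rewrite -leqNgt; apply/y_min/setDP.
Qed.

Lemma first_elems_subset A U c k : A \subset U -> first_elems U c k \subset A ->
  first_elems A c k = first_elems U c k.
Proof.
move=> AU FA; apply/setP => y; apply/idP/idP => [|yF]; last first.
  have yA := subsetP FA _ yF; move: yF; rewrite !inE yA => /and3P [_ -> lt_k] /=.
  exact: leq_ltn_trans (card_seg_subset _ _ AU) lt_k.
rewrite !inE => /and3P [yA cy lt_k]; rewrite (subsetP AU _ yA) cy /=.
rewrite ltnNge; apply/negP => /card_first_seg; apply/negP; rewrite -ltnNge.
apply: leq_ltn_trans lt_k; apply: subset_leq_card; apply/subsetP => z.
rewrite !inE => /andP [zU /andP [/andP [cz zy] zk]].
by rewrite (subsetP FA) ?inE ?zU ?cz ?zk //= cz zy.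
Qed.

Lemma card_first_elems_owners U (z : 'I_n) k :
  #|[set c in U | z \in first_elems U c k]| <= k.
Proof.
apply: (@card_le_strict_antitone _ _ (fun c => card_seg U c z)).
  move=> c1 c2; rewrite !inE => /andP [c1U /and3P [_ c1z _]] /andP [_ /and3P [_ c2z _]] c12.
  apply: proper_card; apply/properP; split.
    apply/subsetP => w; rewrite !inE => /andP [-> /andP [c2w ->]].
    by rewrite (leq_trans (ltnW c12) c2w).
  exists c1; first by rewrite inE c1U leqnn (leq_trans c12 c2z).
  by rewrite inE leqNgt c12 andbF.
by move=> c; rewrite !inE => /andP [_ /and3P []].
Qed.

End FirstElements.

Section IntervalContainment.
Variables (n t : nat) (a b p q : 'I_n -> nat).

Definition mutual_in (x y : 'I_n) : bool := (a x < y < b x) && (p y < x < q y).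

Definition covering (x : nat) : {set 'I_n} := [set y | p y < x < q y].

Definition row_from (x : 'I_n) (c : nat) : {set 'I_n} :=
  [set z | mutual_in x z && (c <= z)].

Definition heavy (x c : 'I_n) : bool := mutual_in x c && (t <= #|row_from x c|).

Definition window (x c : nat) : {set 'I_n} := first_elems (covering x) c t.

Definition changes (c : 'I_n) : {set 'I_n} :=
  [set x : 'I_n | [&& p c < x.-1, x < q c & window x c != window x.-1 c]].

Lemma mutual_in_window x c z : heavy x c -> z \in window x c -> mutual_in x z.
Proof.
case/andP => /andP [/andP [ac _] _] t_row; rewrite !inE => /and3P [zcov cz zt].
rewrite /mutual_in zcov (leq_trans ac cz) andbT /=.
rewrite ltnNge; apply/negP => bz; move: zt; rewrite ltnNge => /negP; apply.
apply: leq_trans t_row (subset_leq_card _); apply/subsetP => w.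
rewrite !inE => /andP [/andP [/andP [_ wb] wcov] cw].
by rewrite wcov cw (leq_trans wb bz).
Qed.

Lemma card_window x c : heavy x c -> t <= #|window x c|.
Proof.
case/andP => _ t_row.
have t_seg : t <= card_seg (covering x) c n.
  apply: leq_trans t_row (subset_leq_card _); apply/subsetP => z.
  by rewrite !inE => /andP [/andP [_ ->] ->]; rewrite ltn_ord.
apply: leq_trans (card_first_seg t_seg) (subset_leq_card _).
by apply/subsetP => z; rewrite !inE => /and3P [-> /andP [-> _] ->].
Qed.

Lemma card_light_row x : #|[set c | mutual_in x c && (#|row_from x c| < t)]| <= t.-1.
Proof.
have row_gt0 c : mutual_in x c -> 0 < #|row_from x c|.
  by move=> xc; apply/card_gt0P; exists c; rewrite inE xc leqnn.
apply: (@card_le_strict_antitone _ _ (fun c => #|row_from x c|.-1)); last first.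
  by move=> c; rewrite inE => /andP [/row_gt0]; lia.
move=> c1 c2; rewrite !inE => /andP [xc1 _] /andP [xc2 _] c12.
have : row_from x c2 \proper row_from x c1.
  apply/properP; split.
    by apply/subsetP => z; rewrite !inE => /andP [-> /(leq_trans (ltnW c12))].
  by exists c1; rewrite !inE ?xc1 ?leqnn // leqNgt c12 andbF.
by move/proper_card; have := row_gt0 _ xc2; lia.
Qed.

Lemma window_change_witness (x c : nat) : window x c != window x.-1 c ->
  exists2 z, z \in first_elems (covering x :|: covering x.-1) c t &
             (z \in covering x) != (z \in covering x.-1).
Proof.
set U := covering x :|: covering x.-1 => changed.
case: (boolP [exists z in first_elems U c t, (z \in covering x) != (z \in covering x.-1)]).
  by case/exists_inP => z; exists z.
rewrite negb_exists_in => /forall_inP same.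
have F_sub y : y = x \/ y = x.-1 -> first_elems U c t \subset covering y.
  move=> y_x; apply/subsetP => z zF; move: (same z zF) (zF); rewrite negbK.
  by rewrite !inE => /eqP eq_cov /andP [/orP]; case: y_x => ->; rewrite eq_cov ?orbb => -[].
case/eqP: changed; rewrite /window.
rewrite (first_elems_subset (subsetUl _ _) (F_sub x (or_introl erefl))).
by rewrite (first_elems_subset (subsetUr _ _) (F_sub x.-1 (or_intror erefl))).
Qed.

Lemma sum_covering_flips (z : 'I_n) :
  \sum_(x : 'I_n) ((z \in covering x) != (z \in covering x.-1)) <= 2.
Proof.
apply: leq_trans (_ : \sum_(x : 'I_n) ((val x == (p z).+1) + (val x == q z)) <= _).
  by apply: leq_sum => -[x xn] _; rewrite !inE /=; lia.
rewrite big_split /= -!card_set_sumb.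
exact: leq_add (card_val_fiber_le1 _ _) (card_val_fiber_le1 _ _).
Qed.

Lemma sum_card_changes : \sum_(c : 'I_n) #|changes c| <= 2 * t * n.
Proof.
pose U x := covering x :|: covering x.-1.
pose flip x (z : 'I_n) := (z \in covering x) != (z \in covering x.-1).
apply: leq_trans (_ : \sum_(c : 'I_n) \sum_(x : 'I_n) \sum_(z : 'I_n)
   (flip x z && (c \in U x) && (z \in first_elems (U x) c t)) <= _).
  apply: leq_sum => c _; rewrite card_set_sumb; apply: leq_sum => x _.
  rewrite inE; case: and3P => // -[pcx xq changed].
  have [z zF zflip] := window_change_witness changed.
  have cx : c \in covering x by rewrite inE; lia.
  by rewrite (bigD1 z) //= /flip zflip cx zF.
rewrite exchange_big /=.
apply: leq_trans (_ : \sum_(x : 'I_n) \sum_(z : 'I_n) flip x z * t <= _).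
  apply: leq_sum => x _; rewrite exchange_big /=; apply: leq_sum => z _.
  case: (flip x z); last by rewrite big1.
  rewrite mul1n -card_set_sumb; apply: leq_trans (card_first_elems_owners (U x) z t).
  by apply: subset_leq_card; apply/subsetP => c; rewrite !inE.
rewrite exchange_big /=.
apply: leq_trans (_ : \sum_(z : 'I_n) 2 * t <= _).
  by apply: leq_sum => z _; rewrite -big_distrl /= leq_mul2r sum_covering_flips orbT.
by rewrite sum_nat_const card_ord mulnC.
Qed.

Hypothesis t_gt0 : 0 < t.
Hypothesis no_biclique : ~ exists S T : {set 'I_n},
  [/\ #|S| = t, #|T| = t & {in S & T, forall x y, mutual_in x y}].

Lemma card_heavy_fiber c V : #|[set x | heavy x c && (window x c == V)]| <= t.-1.
Proof.
set F := [set x | _ && _]; rewrite leqNgt; apply/negP => big_fiber.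
have in_F x : x \in F -> heavy x c /\ window x c = V by rewrite inE => /andP [-> /eqP].
have [S S_F S_t] : exists2 S : {set 'I_n}, S \subset F & #|S| = t.
  by apply: exists_subset_card; rewrite -(prednK t_gt0).
have /card_gt0P [x0 x0S] : 0 < #|S| by rewrite S_t.
have [heavy0 win0] := in_F _ (subsetP S_F _ x0S).
have [T T_win T_t] := exists_subset_card (card_window heavy0).
apply: no_biclique; exists S, T; split => // x y xS yT.
have [heavy_x win_x] := in_F _ (subsetP S_F _ xS).
by apply: (mutual_in_window heavy_x); rewrite win_x -win0 (subsetP T_win).
Qed.

Lemma card_heavy_col c : #|[set x | heavy x c]| <= t.-1 * (1 + #|changes c|).
Proof.
set H := [set x | heavy x c].
rewrite -sum1_card (partition_big_imset (fun x : 'I_n => window x c)) /=.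
apply: (@leq_trans (\sum_(V in [set window x c | x : 'I_n in H]) t.-1)).
  apply: leq_sum => V _; rewrite sum1_card.
  apply: leq_trans (card_heavy_fiber c V); apply: subset_leq_card.
  by apply/subsetP => x; rewrite unfold_in /= !inE.
rewrite sum_nat_const mulnC leq_mul2l; apply/orP; right.
apply: leq_trans (card_imset_interval n (fun m => window m c) (p c) (q c)).
apply: subset_leq_card; apply/subsetP => V /imsetP [x + ->].
by rewrite inE => /andP [/andP [_ x_in] _]; apply: imset_f; rewrite inE.
Qed.

Lemma card_mutual_in :
  #|[set z : 'I_n * 'I_n | mutual_in z.1 z.2]| <= t.-1 * (2 + 2 * t) * n.
Proof.
have -> : #|[set z : 'I_n * 'I_n | mutual_in z.1 z.2]| = \sum_x \sum_y mutual_in x y.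
  by rewrite card_set_sumb pair_big.
apply: leq_trans (_ : \sum_x \sum_y
   (heavy x y + (mutual_in x y && (#|row_from x y| < t))) <= _).
  apply: leq_sum => x _; apply: leq_sum => y _; rewrite /heavy.
  by case: (mutual_in x y); case: leqP.
under eq_bigr => x _ do rewrite big_split /=.
rewrite big_split /=.
have heavy_part : \sum_x \sum_y heavy x y <= t.-1 * (n + 2 * t * n).
  rewrite exchange_big /=.
  apply: leq_trans (_ : \sum_(c : 'I_n) t.-1 * (1 + #|changes c|) <= _).
    by apply: leq_sum => c _; rewrite -card_set_sumb card_heavy_col.
  rewrite -big_distrr /= leq_mul2l big_split /= sum_nat_const card_ord muln1.
  by rewrite leq_add2l sum_card_changes orbT.
have light_part : \sum_x \sum_y (mutual_in x y && (#|row_from x y| < t)) <= t.-1 * n.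
  apply: leq_trans (_ : \sum_(x : 'I_n) t.-1 <= _).
    by apply: leq_sum => x _; rewrite -card_set_sumb card_light_row.
  by rewrite sum_nat_const card_ord mulnC.
apply: leq_trans (leq_add heavy_part light_part) _; nia.
Qed.

End IntervalContainment.

Lemma card_graph_le n (f : 'I_n -> nat) : #|[set z : 'I_n * 'I_n | val z.2 == f z.1]| <= n.
Proof.
rewrite -[n in _ <= n]card_ord; apply: (@leq_card_in _ _ fst) => -[x y] [x' y'].
rewrite !inE /= => /eqP fy /eqP fy' xx'; rewrite -xx' in fy'.
by congr pair => //; exact: val_inj (etrans fy (esym fy')).
Qed.

Lemma card_cograph_le n (f : 'I_n -> nat) : #|[set z : 'I_n * 'I_n | val z.1 == f z.2]| <= n.
Proof.
rewrite -[n in _ <= n]card_ord; apply: (@leq_card_in _ _ snd) => -[x y] [x' y'].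
rewrite !inE /= => /eqP fx /eqP fx' yy'; rewrite -yy' in fx'.
by congr pair => //; exact: val_inj (etrans fx (esym fx')).
Qed.

(* [x] and [y] lie in the left and right halves of one dyadic block of length [2 ^ k.+1]. *)
Definition splits_at (k x y : nat) : bool :=
  (x %/ 2 ^ k %% 2 == 0) && (y %/ 2 ^ k == (x %/ 2 ^ k).+1).

Lemma splits_at_exists x y : x < y -> exists2 k, splits_at k x y & 2 ^ k <= y.
Proof.
move=> xy; pose P j := x %/ 2 ^ j == y %/ 2 ^ j.
have exP : exists j, P j.
  have y_lt : y < 2 ^ y.+1 := ltnW (ltn_expl y.+1 (isT : 1 < 2)).
  by exists y.+1; rewrite /P (divn_small (ltn_trans xy y_lt)) (divn_small y_lt).
case: (ex_minnP exP) => -[|k] Pj j_min.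
  by move: Pj; rewrite /P expn0 !divn1 => /eqP xy'; rewrite xy' ltnn in xy.
have nPk : ~~ P k by apply/negP => /j_min; rewrite ltnn.
move: Pj nPk; rewrite /P expnSr !divnMA.
have := leq_div2r (2 ^ k) (ltnW xy).
set X := x %/ 2 ^ k; set Y := y %/ 2 ^ k => XY Pk nPk.
have [X_even YX] : X %% 2 = 0 /\ Y = X.+1 by lia.
exists k; first by rewrite /splits_at -/X -/Y X_even YX !eqxx.
by rewrite -(mul1n (2 ^ k)) -leq_divRL ?expn_gt0 // -/Y YX.
Qed.

Section Extremes.
Variable n : nat.
Implicit Type A : {set 'I_n}.

(* As natural numbers; the empty set has [max_val] 0 and [min_val] n. *)
Definition max_val A : nat := \max_(y in A) y.
Definition min_val A : nat := n - \max_(y in A) (n - y).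

Lemma max_val_ub A (y : 'I_n) : y \in A -> y <= max_val A.
Proof. by move=> yA; apply: leq_bigmax_cond. Qed.

Lemma min_val_lb A (y : 'I_n) : y \in A -> min_val A <= y.
Proof.
move=> yA; rewrite /min_val.
have : n - y <= \max_(z in A) (n - z) by apply: leq_bigmax_cond.
by have := ltn_ord y; lia.
Qed.

Lemma max_val_mem A : 0 < #|A| -> exists2 y : 'I_n, y \in A & y = max_val A :> nat.
Proof.
by rewrite /max_val => /(eq_bigmax_cond (fun y : 'I_n => nat_of_ord y)) [y yA ->]; exists y.
Qed.

Lemma min_val_mem A : 0 < #|A| -> exists2 y : 'I_n, y \in A & y = min_val A :> nat.
Proof.
move/(eq_bigmax_cond (fun y : 'I_n => n - y)) => [y yA y_max]; exists y => //.
by rewrite /min_val y_max subKn // ltnW.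
Qed.

Lemma min_val_lt_card A : min_val A < n -> 0 < #|A|.
Proof.
rewrite lt0n; apply: contraL => /eqP/card0_eq A0.
by rewrite /min_val big_pred0 // subn0 ltnn.
Qed.

End Extremes.

Section DyadicLevel.
Variables (n : nat) (e : rel 'I_n) (k : nat).

Definition right_nbrs (x : 'I_n) : {set 'I_n} := [set y | e x y && splits_at k x y].
Definition left_nbrs (y : 'I_n) : {set 'I_n} := [set x | e x y && splits_at k x y].
Definition level_edges : {set 'I_n * 'I_n} := [set z | e z.1 z.2 && splits_at k z.1 z.2].

Definition level_mutual : 'I_n -> 'I_n -> bool :=
  mutual_in (fun x => min_val (right_nbrs x)) (fun x => max_val (right_nbrs x))
            (fun y => min_val (left_nbrs y)) (fun y => max_val (left_nbrs y)).

Lemma level_mutual_double_cherry x y :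
  symmetric e -> level_mutual x y -> double_cherry e x y.
Proof.
move=> e_sym /andP [/andP [v1y yv2] /andP [u1x xu2]].
have Rx : 0 < #|right_nbrs x| by apply: min_val_lt_card; have := ltn_ord y; lia.
have Ly : 0 < #|left_nbrs y| by apply: min_val_lt_card; have := ltn_ord x; lia.
have [v1 + v1E] := min_val_mem Rx; have [v2 + v2E] := max_val_mem Rx.
have [u1 + u1E] := min_val_mem Ly; have [u2 + u2E] := max_val_mem Ly.
rewrite -v1E in v1y; rewrite -v2E in yv2; rewrite -u1E in u1x; rewrite -u2E in xu2.
rewrite !inE => /andP [e_u2y s_u2y] /andP [e_u1y s_u1y] /andP [e_xv2 _] /andP [e_xv1 s_xv1].
(* The level-[k] left neighbours of [y] all lie in the half-block just before
   the one containing the level-[k] right neighbours of [x]. *)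
have u2v1 : u2 < v1.
  have := leq_div2r (2 ^ k) (ltnW u1x); move: s_xv1 s_u1y s_u2y; rewrite /splits_at.
  set X := x %/ _; set Y := y %/ _; set U1 := u1 %/ _; set U2 := u2 %/ _; set V1 := v1 %/ _.
  move=> s_xv1 s_u1y s_u2y U1X; rewrite ltnNge; apply/negP => /(leq_div2r (2 ^ k)).
  rewrite -/U2 -/V1; lia.
split; first by rewrite neq_ltn (ltn_trans xu2 (ltn_trans u2v1 v1y)).
right; left; exists u1, u2, v1, v2; split; first by split.
by split; rewrite // e_sym.
Qed.

Lemma card_level_edges :
  #|level_edges| <= #|[set z : 'I_n * 'I_n | level_mutual z.1 z.2]| + 4 * n.
Proof.
set a := fun x => min_val (right_nbrs x); set b := fun x => max_val (right_nbrs x).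
set p := fun y => min_val (left_nbrs y); set q := fun y => max_val (left_nbrs y).
set M := [set z : 'I_n * 'I_n | _].
have sub : level_edges \subset
    M :|: [set z | val z.2 == a z.1] :|: [set z | val z.2 == b z.1]
      :|: [set z | val z.1 == p z.2] :|: [set z | val z.1 == q z.2].
  apply/subsetP => -[x y]; rewrite !inE /= => xy.
  have yR : y \in right_nbrs x by rewrite inE.
  have xL : x \in left_nbrs y by rewrite inE.
  have := min_val_lb yR; have := max_val_ub yR; have := min_val_lb xL; have := max_val_ub xL.
  rewrite /level_mutual /mutual_in /a /b /p /q; lia.
apply: leq_trans (subset_leq_card sub) _.
rewrite !mulSn mul0n addn0 !addnA.
have cardU (A B : {set 'I_n * 'I_n}) : #|A :|: B| <= #|A| + #|B| := (leq_card_setU A B).1.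
apply: leq_trans (cardU _ _) (leq_add _ (card_cograph_le q)).
apply: leq_trans (cardU _ _) (leq_add _ (card_cograph_le p)).
apply: leq_trans (cardU _ _) (leq_add _ (card_graph_le b)).
exact: leq_trans (cardU _ _) (leq_add (leqnn _) (card_graph_le a)).
Qed.

End DyadicLevel.

Lemma num_edges_le_levels n (e : rel 'I_n) :
  num_edges e <= \sum_(k < (trunc_log 2 n).+1) #|level_edges e k|.
Proof.
apply: leq_trans (leq_card_bigcup _ (fun k : 'I_(trunc_log 2 n).+1 => level_edges e k)).
apply: subset_leq_card; apply/subsetP => -[x y]; rewrite inE /= => /andP [xy e_xy].
have [k s_xy k_y] := splits_at_exists xy.
have k_lt : k < (trunc_log 2 n).+1.
  by rewrite ltnS; apply: trunc_log_max => //; exact: leq_trans k_y (ltnW (ltn_ord y)).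
by apply/bigcupP; exists (Ordinal k_lt); rewrite // inE /= e_xy.
Qed.

Lemma num_edges_le_log t n (e : rel 'I_n) : 0 < t -> symmetric e ->
  ~ (exists S T : {set 'I_n}, #|S| = t /\ #|T| = t /\
       (forall s w, s \in S -> w \in T -> double_cherry e s w)) ->
  num_edges e <= (trunc_log 2 n).+1 * ((t.-1 * (2 + 2 * t) + 4) * n).
Proof.
move=> t_gt0 e_sym no_dc; apply: leq_trans (num_edges_le_levels e) _.
rewrite -[X in _ <= X * _]card_ord -sum_nat_const; apply: leq_sum => k _.
apply: leq_trans (card_level_edges e k) _; rewrite mulnDl leq_add2r.
apply: card_mutual_in => // -[S [T [S_t T_t ST]]].
apply: no_dc; exists S, T; do 2!split => //.
by move=> s w sS wT; apply: level_mutual_double_cherry => //; exact: ST.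
Qed.

Lemma INR_expn m k : INR (m ^ k) = (INR m ^ k)%R.
Proof. by elim: k => [|k IH] //; rewrite expnS -multE mult_INR IH. Qed.

Lemma trunc_log2_ln n : 0 < n -> (INR (trunc_log 2 n) * ln 2 <= ln (INR n))%R.
Proof.
move=> n_gt0; rewrite -ln_pow; last lra.
have : (2 ^ trunc_log 2 n <= INR n)%R.
  rewrite (_ : 2%R = INR 2); last by rewrite /=; lra.
  by rewrite -INR_expn; apply/le_INR/leP/trunc_logP.
case/Rle_lt_or_eq_dec => [lt | ->]; last exact: Rle_refl.
by apply/Rlt_le/ln_increasing => //; apply: pow_lt; lra.
Qed.

Unset Implicit Arguments.

Theorem corollary3p3 (t : nat) (ht : (0 < t)%N) :
  exists C : R, forall (n : nat) (e : rel 'I_n),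
    (2 <= n)%N ->
    simple_graph e ->
    ~ (exists S T : {set 'I_n},
          #|S| = t /\ #|T| = t /\
          (forall s w, s \in S -> w \in T -> double_cherry e s w)) ->
    (INR (num_edges e) <= C * INR n * ln (INR n))%R.
Proof.
pose K := t.-1 * (2 + 2 * t) + 4.
exists (2 * INR K / ln 2)%R => n e n_ge2 [e_sym _] no_dc.
set L := trunc_log 2 n.
have L_gt0 : 0 < L by rewrite trunc_log_gt0.
have edges_le : num_edges e <= L * (K * n) * 2.
  by apply: leq_trans (num_edges_le_log ht e_sym no_dc) _; rewrite -/L; nia.
have ln2_gt0 : (0 < ln 2)%R by rewrite -ln_1; apply: ln_increasing; lra.
have L_le : (INR L <= ln (INR n) / ln 2)%R.
  apply: (Rmult_le_reg_r (ln 2)) => //.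
  by rewrite /Rdiv Rmult_assoc Rinv_l ?Rmult_1_r; [apply: trunc_log2_ln; lia | lra].
have KN_ge0 : (0 <= INR K * INR n)%R by apply: Rmult_le_pos; apply: pos_INR.
apply: Rle_trans (le_INR _ _ (elimT leP edges_le)) _.
rewrite -!multE !mult_INR.
replace (2 * INR K / ln 2 * INR n * ln (INR n))%R
  with (ln (INR n) / ln 2 * (INR K * INR n) * 2)%R by (field; lra).
simpl (INR 2); nra.
Qed.
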